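(* Let $D \in \mathbb{N}^+$, let $\omega_0^{(1)},\dots,\omega_0^{(D)}>0$ be fundamental frequencies, and let $\mathcal{I} \subset \mathbb{Z}_{\ge 0}^D$ be a nonempty finite index set (for example an index set of some refinement $R$) with cardinality $C_{\mathcal{I}}=|\mathcal{I}|$. For $\mathbf{k}\in\mathcal{I}$ let $\eta(\mathbf{k})=\#\{d\in\{1,\dots,D\}: k_d\neq 0\}$. Let $\hat{\Phi}^{\text{mask}}_{\mathcal{I}}(\mathbf{x})$ be the sparse (masked) Index Set Fourier Series feature map and $\hat{\Phi}^{\text{full}}_{\mathcal{I}}(\mathbf{x})$ the full feature map described in the context. Then $$|\mathcal{I}| \;\le\; |\hat{\Phi}^{\text{mask}}_{\mathcal{I}}(\mathbf{x})| \;=\; \sum_{\mathbf{k}\in\mathcal{I}} 2^{\eta(\mathbf{k})} \;\le\; |\hat{\Phi}^{\text{full}}_{\mathcal{I}}(\mathbf{x})| \;\le\; C_{\mathcal{I}}\,2^{D}.$$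
   Context: For $\mathbf{k}=(k_1,\dots,k_D)\in\mathcal{I}$ let $\rho_{\mathbf{k}}=\prod_{d=1}^D q^{(d)}_{k_d}$ be a product of nonnegative per-dimension univariate Fourier series coefficients of the kernel being approximated, and $a_{\mathbf{k},d}=k_d\omega_0^{(d)}$. Full feature map: letting $\Xi^{(D)}$ be the $2^{D-1}$ sign vectors $\boldsymbol{\xi}\in\{+1,-1\}^D$ with $\xi_1=+1$, $\hat{\Phi}^{\text{full}}_{\mathcal{I}}(\mathbf{x})$ is the vector obtained by concatenating, over all $\mathbf{k}\in\mathcal{I}$ and $\boldsymbol{\xi}\in\Xi^{(D)}$, the two entries $\sqrt{\rho_{\mathbf{k}}/2^{D-1}}\cos(\sum_{d=1}^D a_{\mathbf{k},d}\xi_d x_d)$ and $\sqrt{\rho_{\mathbf{k}}/2^{D-1}}\sin(\sum_{d=1}^D a_{\mathbf{k},d}\xi_d x_d)$. Sparse (masked) feature map: for each $\mathbf{k}$, the factors $\cos(k_d\omega_0^{(d)}(x_d-x_d'))$ with $k_d=0$ in the product $\prod_{d=1}^D q^{(d)}_{k_d}\cos(k_d\omega_0^{(d)}(x_d-x'_d))$ are replaced by the constant $1$ (masking), and only the remaining $\eta(\mathbf{k})$ data-dependent cosine factors are expanded by repeated use of $\cos u\cos v=\tfrac12[\cos(u-v)+\cos(u+v)]$ and $\cos(u-v)=\cos u\cos v+\sin u\sin v$. Concretely, with $S(\mathbf{k})=\{d:k_d\neq 0\}$: if $S(\mathbf{k})=\emptyset$ the block for $\mathbf{k}$ is the single constant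 entry $\sqrt{\rho_{\mathbf{k}}}$; otherwise, letting $d_0=\min S(\mathbf{k})$, the block consists, for each sign vector $\mathbf{s}\in\{+1,-1\}^{S(\mathbf{k})}$ with $s_{d_0}=+1$, of the two entries $c\cos(\sum_{d\in S(\mathbf{k})}a_{\mathbf{k},d}s_dx_d)$ and $c\sin(\sum_{d\in S(\mathbf{k})}a_{\mathbf{k},d}s_dx_d)$ with a data-independent scaling $c=\sqrt{\rho_{\mathbf{k}}/2^{\eta(\mathbf{k})-1}}$. $\hat{\Phi}^{\text{mask}}_{\mathcal{I}}(\mathbf{x})$ is the concatenation of these blocks over $\mathbf{k}\in\mathcal{I}$. The cardinality $|\cdot|$ of a feature map means the number of its entries. *)

From mathcomp Require Import all_boot all_order all_algebra.
From mathcomp Require Import reals trigo.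
Set Implicit Arguments. Unset Strict Implicit. Unset Printing Implicit Defensive.
Import Order.TTheory GRing.Theory Num.Theory.
Local Open Scope ring_scope.

Section ISFF.
Variables (R : realType) (D : nat).

Definition mindex := {ffun 'I_D -> nat}.

Definition rho (q : 'I_D -> nat -> R) (k : mindex) : R := \prod_(d : 'I_D) q d (k d).

Definition acoef (omega0 : 'I_D -> R) (k : mindex) (d : 'I_D) : R := (k d)%:R * omega0 d.

Definition sgnR (b : bool) : R := if b then 1 else -1.

Definition supp (k : mindex) : {set 'I_D} := [set d | k d != 0%N].
Definition eta (k : mindex) : nat := #|supp k|.

Definition Xi : seq {ffun 'I_D -> bool} :=
  [seq xi : {ffun 'I_D -> bool} <- enum {ffun 'I_D -> bool} | [forall d : 'I_D, (val d == 0%N) ==> xi d]].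

Definition Phi_full (omega0 : 'I_D -> R) (q : 'I_D -> nat -> R) (I : seq mindex)
    (x : 'I_D -> R) : seq R :=
  flatten [seq flatten [seq
      let c := Num.sqrt (rho q k / 2 ^+ D.-1) in
      let u := \sum_(d : 'I_D) acoef omega0 k d * sgnR (xi d) * x d in
      [:: c * cos u; c * sin u]
    | xi : {ffun 'I_D -> bool} <- Xi] | k <- I].

(* sign vectors s in {+1,-1}^{S(k)} with s_{d0} = +1, d0 = min S(k);
   encoded as boolean vectors on 'I_D that are constantly true (+1)
   outside S(k) (so the encoding is a bijection with {+1,-1}^{S(k)}). *)
Definition signsS (k : mindex) : seq {ffun 'I_D -> bool} :=
  [seq s : {ffun 'I_D -> bool} <- enum {ffun 'I_D -> bool} |
     [forall d : 'I_D, (d \notin supp k) ==> s d] &&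
     [forall d : 'I_D, ((d \in supp k) &&
        [forall d' : 'I_D, (d' \in supp k) ==> (val d <= val d')%N]) ==> s d]].

Definition mask_block (omega0 : 'I_D -> R) (q : 'I_D -> nat -> R) (k : mindex)
    (x : 'I_D -> R) : seq R :=
  if supp k == set0 then [:: Num.sqrt (rho q k)] else
  flatten [seq
      let c := Num.sqrt (rho q k / 2 ^+ (eta k).-1) in
      let u := \sum_(d in supp k) acoef omega0 k d * sgnR (s d) * x d in
      [:: c * cos u; c * sin u]
    | s : {ffun 'I_D -> bool} <- signsS k].

Definition Phi_mask (omega0 : 'I_D -> R) (q : 'I_D -> nat -> R) (I : seq mindex)
    (x : 'I_D -> R) : seq R :=
  flatten [seq mask_block omega0 q k x | k <- I].

End ISFF.

From mathcomp Require Import all_boot all_order all_algebra.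
From mathcomp Require Import reals trigo.
Import Order.TTheory GRing.Theory Num.Theory.

(* Both feature maps are concatenations of blocks, one per k in I, and only
   their sizes matter.  A full block lists a cosine and a sine for each of the 2^(D-1) sign
   vectors with first sign fixed, i.e. 2^D entries.  A masked block is a single
   constant when k = 0, and otherwise lists a cosine and a sine for each of the
   2^(eta k - 1) sign patterns on S(k) with the sign at min S(k) fixed, i.e.
   2^(eta k) entries.  Since 1 <= 2^(eta k) <= 2^D, summing over I gives the
   chain of inequalities. *)

Lemma size_flatten_map (A B : Type) (f : A -> seq B) (s : seq A) :
  size (flatten [seq f x | x <- s]) = (\sum_(x <- s) size (f x))%N.
Proof. by rewrite size_flatten /shape -map_comp sumnE big_map. Qed.

Lemma size_filter_enum (T : finType) (P : pred T) :
  size [seq x <- enum T | P x] = #|P|.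
Proof. by rewrite cardE /enum_mem filter_predT. Qed.

Lemma size_ffun_true_on (T : finType) (A : {pred T}) :
  size [seq f : {ffun T -> bool} <- enum {ffun T -> bool} | [forall x in A, f x]]
  = 2 ^ #|[predC A]|.
Proof.
rewrite size_filter_enum -card_bool -(card_pffun_on true).
apply: eq_card => f; rewrite !inE; apply: eq_forallb => x.
by rewrite /finfun.fmem /= !inE; case: (x \in A); case: (f x).
Qed.

Lemma size_Xi (D : nat) : (0 < D)%N -> size (Xi D) = 2 ^ D.-1.
Proof.
move=> D_gt0.
rewrite [size _](@size_ffun_true_on _ [pred d : 'I_D | val d == 0%N]).
have card_first : #|[pred d : 'I_D | val d == 0%N]| = 1%N.
  by rewrite -(card1 (Ordinal D_gt0)); apply: eq_card => d; rewrite !inE.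
have := cardC [pred d : 'I_D | val d == 0%N].
by rewrite card_first card_ord add1n => predC_card; rewrite -[in RHS]predC_card.
Qed.

Lemma size_signsS (D : nat) (k : mindex D) :
  supp k != set0 -> size (signsS k) = 2 ^ (eta k).-1.
Proof.
case/set0Pn=> i0 i0_supp.
case: (arg_minnP (fun d : 'I_D => val d) i0_supp) => d0 d0_min_supp d0_min.
have d0_supp : d0 \in supp k := d0_min_supp.
have min_suppE d : (d \in supp k) &&
    [forall d' : 'I_D, (d' \in supp k) ==> (val d <= val d')%N] = (d == d0).
  apply/andP/eqP => [[d_supp /forallP d_min]|->]; last first.
    by split=> //; apply/forallP => d'; apply/implyP; apply: d0_min.
  apply: val_inj; apply/eqP; rewrite eqn_leq d0_min //.
  by rewrite (implyP (d_min d0)).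
set fixed := [pred d : 'I_D | (d \notin supp k) || (d == d0)].
have -> : signsS k =
    [seq s : {ffun 'I_D -> bool} <- enum {ffun 'I_D -> bool} | [forall d in fixed, s d]].
  apply: eq_filter => s.
  apply/andP/forallP => [[/forallP out /forallP at_min] d|s_fixed].
    apply/implyP; rewrite inE => /orP[d_out|/eqP->]; first exact: (implyP (out d)).
    by apply: (implyP (at_min d0)); rewrite min_suppE.
  split; apply/forallP => d; apply/implyP => d_in; apply: (implyP (s_fixed d)).
    by rewrite inE d_in.
  by rewrite inE -min_suppE d_in orbT.
rewrite size_ffun_true_on /eta (cardD1 d0 (supp k)) d0_supp.
by congr (2 ^ _); apply: eq_card => d; rewrite !inE negb_or negbK andbC.
Qed.

Lemma size_mask_block (R : realType) (D : nat) (omega0 : 'I_D -> R)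
    (q : 'I_D -> nat -> R) (k : mindex D) (x : 'I_D -> R) :
  size (mask_block omega0 q k x) = 2 ^ eta k.
Proof.
rewrite /mask_block; case: ifP => [/eqP supp0|supp_neq0].
  by rewrite /eta supp0 cards0.
have eta_gt0 : (0 < eta k)%N by rewrite /eta card_gt0 supp_neq0.
rewrite size_flatten_map /= big_const_seq count_predT iter_addn_0.
by rewrite size_signsS ?supp_neq0 // -expnS prednK.
Qed.

Lemma size_Phi_mask (R : realType) (D : nat) (omega0 : 'I_D -> R)
    (q : 'I_D -> nat -> R) (I : seq (mindex D)) (x : 'I_D -> R) :
  size (Phi_mask omega0 q I x) = (\sum_(k <- I) 2 ^ eta k)%N.
Proof. by rewrite size_flatten_map; apply: eq_bigr => k _; apply: size_mask_block. Qed.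

Lemma size_Phi_full (R : realType) (D : nat) (omega0 : 'I_D -> R)
    (q : 'I_D -> nat -> R) (I : seq (mindex D)) (x : 'I_D -> R) :
  (0 < D)%N -> size (Phi_full omega0 q I x) = (size I * 2 ^ D)%N.
Proof.
move=> D_gt0; rewrite size_flatten_map.
under eq_bigr => k _ do rewrite size_flatten_map /= big_const_seq count_predT iter_addn_0.
by rewrite big_const_seq count_predT iter_addn_0 size_Xi // -expnS prednK // mulnC.
Qed.

Lemma eta_le (D : nat) (k : mindex D) : (eta k <= D)%N.
Proof. by rewrite /eta -[leqRHS]card_ord max_card. Qed.

Theorem lemma2 (R : realType) (D : nat) (hD : (0 < D)%N)
  (omega0 : 'I_D -> R) (homega : forall d, (0 < omega0 d)%R)
  (q : 'I_D -> nat -> R) (hq : forall d n, (0 <= q d n)%R)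
  (I : seq (mindex D)) (hI_uniq : uniq I) (hI_ne : I != [::])
  (x : 'I_D -> R) :
  let C := size I in
  [/\ (size I <= size (Phi_mask omega0 q I x))%N,
      size (Phi_mask omega0 q I x) = (\sum_(k <- I) 2 ^ eta k)%N,
      (\sum_(k <- I) 2 ^ eta k <= size (Phi_full omega0 q I x))%N
    & (size (Phi_full omega0 q I x) <= C * 2 ^ D)%N].
Proof.
rewrite /= size_Phi_mask size_Phi_full //; split=> //.
- by rewrite -sum1_size; apply: leq_sum => k _; rewrite expn_gt0.
- rewrite -sum1_size big_distrl /=; apply: leq_sum => k _.
  by rewrite mul1n leq_exp2l // eta_le.
Qed.
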